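(* Suppose $\sigma$ is an automorphism of $D$ and $a\in D$. Then $f(t)=t^4-a\in D[t;\sigma]$ is reducible if and only if there exist $c,d\in D$ with $$\sigma^2(c)\sigma(c)c+\sigma^2(d)c+\sigma^2(c)\sigma(d)=0\quad\text{and}\quad \sigma^2(d)d+\sigma^2(c)\sigma(c)d=a.$$
   Context: $D$ is an associative division ring, $\sigma$ a ring automorphism of $D$, and $D[t;\sigma]$ the skew polynomial ring with $ta=\sigma(a)t$. $f$ is reducible if it can be written $f=gh$ with $\deg g,\deg h<\deg f$. *)

From mathcomp Require Import all_boot all_order all_algebra.
Set Implicit Arguments. Unset Strict Implicit. Unset Printing Implicit Defensive.
Import GRing.Theory.
Local Open Scope ring_scope.

(* Skew polynomial ring D[t;s]: elements are represented by their coefficient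
   polynomials in {poly D} (only the additive structure and coefficients of
   {poly D} are used); multiplication is the skew product determined by
   t a = s(a) t, i.e. (a t^i)(b t^j) = a s^i(b) t^(i+j). *)
Definition skew_mul (D : nzRingType) (s : D -> D) (p q : {poly D}) : {poly D} :=
  \poly_(k < size p + size q) \sum_(i < k.+1) p`_i * iter i s q`_(k - i).

Definition skew_reducible (D : nzRingType) (s : D -> D) (f : {poly D}) : Prop :=
  exists g h : {poly D},
    f = skew_mul s g h /\ (size g < size f)%N /\ (size h < size f)%N.

(* A factorisation t^4 - a = g h with deg g, deg h < 4 has (deg g, deg h) equal
   to (3,1), (2,2) or (1,3), since in a division ring the top coefficient
   g_m s^m(h_n) of g h cannot vanish.  Comparing coefficients, a monic right
   factor t^2 - c t - d forces the two equations on (c, d), with left cofactor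
   t^2 + s^2(c) t + s^2(c) s(c) + s^2(d); conversely this product is t^4 - a.
   A right factor t - b yields s^3(b) s^2(b) s(b) b = a, solved by c = 0,
   d = s(b) b; a left factor of degree one is handled similarly, solving for
   d with the help of s^-1. *)

From mathcomp Require Import all_boot all_order all_algebra zify.
Set Implicit Arguments. Unset Strict Implicit. Unset Printing Implicit Defensive.
Import GRing.Theory.
Local Open Scope ring_scope.

Definition quartic_factor_eqs {D : pzSemiRingType} (s : {rmorphism D -> D})
    (a c d : D) :=
  s (s c) * s c * c + s (s d) * c + s (s c) * s d = 0 /\
  s (s d) * d + s (s c) * s c * d = a.

Section SkewCoefficients.
Variables (D : nzRingType) (s : {rmorphism D -> D}).

Lemma iter_rmorph0 i : iter i s 0 = 0.
Proof. by elim: i => //= i ->; rewrite rmorph0. Qed.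

Lemma skew_term_eq0 (p q : {poly D}) i k :
  (size p + size q <= k.+1)%N -> (i <= k)%N -> p`_i * iter i s q`_(k - i) = 0.
Proof.
move=> le_pq_k le_ik; have [lt_i_p | le_p_i] := ltnP i (size p).
  have le_q_ki : (size q <= k - i)%N by lia.
  by rewrite (nth_default 0 le_q_ki) iter_rmorph0 mulr0.
by rewrite nth_default ?mul0r.
Qed.

Lemma coef_skew_mul p q k :
  (skew_mul s p q)`_k = \sum_(i < k.+1) p`_i * iter i s q`_(k - i).
Proof.
rewrite /skew_mul coef_poly; case: ltnP => // le_pq_k.
by rewrite big1 // => i _; apply: skew_term_eq0 (leqW le_pq_k) (leq_ord i).
Qed.

Lemma coef_skew_mul_eq0 (p q : {poly D}) k :
  (size p + size q <= k.+1)%N -> (skew_mul s p q)`_k = 0.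
Proof.
move=> le_pq_k; rewrite coef_skew_mul big1 // => i _.
exact: skew_term_eq0 le_pq_k (leq_ord i).
Qed.

Lemma quartic_eq_skew_mul_quadratics a c d :
  quartic_factor_eqs s a c d ->
  'X^4 - a%:P = skew_mul s (Poly [:: s (s c) * s c + s (s d); s (s c); 1])
                           (Poly [:: - d; - c; 1]).
Proof.
move=> [eq_c eq_d]; apply/polyP => k; rewrite coefB coefXn coefC.
have [le5k | ltk5] := leqP 5 k.
  rewrite coef_skew_mul_eq0; last first.
    by apply: leq_trans (leq_add (size_Poly _) (size_Poly _)) _.
  by case: k le5k => [|[|[|[|[|k]]]]] //= _; rewrite subr0.
rewrite coef_skew_mul.
case: k ltk5 => [|[|[|[|[|k]]]]] // _;
  rewrite !big_ord_recl big_ord0 !coef_Poly /=;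
  rewrite ?(subr0, sub0r, mulr0, mul0r, mulr1, mul1r, addr0, add0r,
            rmorph0, rmorph1, rmorphN, mulrN) //.
- by rewrite mulrDl addrC eq_d.
- by rewrite -opprD mulrDl eq_c oppr0.
- by rewrite -opprD subrr.
- by rewrite subrr.
Qed.

End SkewCoefficients.

Section QuarticFactors.
Variables (D : unitRingType) (hD : forall x : D, x != 0 -> x \is a GRing.unit).
Variables (s : {rmorphism D -> D}) (sinv : D -> D).
Hypotheses (sK : cancel s sinv) (Ks : cancel sinv s).
Variable a : D.

Lemma rmorph_neq0 x : x != 0 -> s x != 0.
Proof. by apply: contra_neq => sx0; apply: (can_inj sK); rewrite sx0 rmorph0. Qed.

Lemma mulr_eq0_neq0 (x y : D) : x * y = 0 -> y != 0 -> x = 0.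
Proof. by move=> xy0 /hD y_unit; rewrite -(mulrK y_unit x) /= xy0 mul0r. Qed.

Lemma quartic_factor_eqs_c0 (d : D) :
  s (s d) * d = a -> quartic_factor_eqs s a 0 d.
Proof. by move=> <-; split; rewrite !rmorph0 !(mulr0, mul0r, addr0, add0r). Qed.

Lemma quartic_eqs_of_right_linear_factor g0 g1 g2 g3 h0 h1 :
  g3 * s (s (s h1)) = 1 ->
  g2 * s (s h1) + g3 * s (s (s h0)) = 0 ->
  g1 * s h1 + g2 * s (s h0) = 0 ->
  g0 * h1 + g1 * s h0 = 0 ->
  g0 * h0 = - a ->
  exists c d, quartic_factor_eqs s a c d.
Proof.
move=> E4 E3 E2 E1 E0.
have h1_neq0 : h1 != 0.
  by apply: contra_eq_neq E4 => ->; rewrite !rmorph0 mulr0 eq_sym oner_neq0.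
have [b h0E] : exists b, h0 = - (h1 * b).
  by exists (- (h1^-1 * h0)); rewrite mulrN mulVKr ?opprK ?hD.
rewrite h0E !rmorphN !rmorphM !mulrN in E3 E2 E1 E0.
move/subr0_eq: E3; rewrite mulrA E4 mul1r => A3.
move/subr0_eq: E2; rewrite mulrA A3 => A2.
move/subr0_eq: E1; rewrite mulrA A2 => A1.
move/oppr_inj: E0; rewrite mulrA A1 => A0.
by exists 0, (s b * b); apply: quartic_factor_eqs_c0; rewrite !rmorphM !mulrA.
Qed.

Lemma quartic_eqs_of_quadratic_factors g0 g1 g2 h0 h1 h2 :
  h2 != 0 ->
  g2 * s (s h2) = 1 ->
  g1 * s h2 + g2 * s (s h1) = 0 ->
  g0 * h2 + g1 * s h1 + g2 * s (s h0) = 0 ->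
  g0 * h1 + g1 * s h0 = 0 ->
  g0 * h0 = - a ->
  exists c d, quartic_factor_eqs s a c d.
Proof.
move=> /hD h2_unit E4 E3 E2 E1 E0.
have normalize h : exists c, h = - (h2 * c).
  by exists (- (h2^-1 * h)); rewrite mulrN mulVKr ?opprK.
have [[c h1E] [d h0E]] := (normalize h1, normalize h0).
exists c, d; rewrite h1E h0E !rmorphN !rmorphM !mulrN !mulrA in E3 E2 E1 E0.
move/subr0_eq: E3; rewrite E4 mul1r => A3.
have g0h2E : g0 * h2 = s (s c) * s c + s (s d).
  by apply/subr0_eq; rewrite opprD addrA -E2 A3 E4 !mul1r.
move: E1; rewrite A3 g0h2E -opprD => /eqP; rewrite oppr_eq0 mulrDl => /eqP E1.
by move/oppr_inj: E0; rewrite g0h2E mulrDl addrC.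
Qed.

Lemma quartic_eqs_of_left_linear_factor g0 g1 h0 h1 h2 h3 :
  h3 != 0 ->
  g1 * s h3 = 1 ->
  g0 * h3 + g1 * s h2 = 0 ->
  g0 * h2 + g1 * s h1 = 0 ->
  g0 * h1 + g1 * s h0 = 0 ->
  g0 * h0 = - a ->
  exists c d, quartic_factor_eqs s a c d.
Proof.
move=> h3_neq0 E4 E3 E2 E1 E0.
have h3_unit := hD h3_neq0; have sh3_unit := hD (rmorph_neq0 h3_neq0).
have g1E : g1 = (s h3)^-1 by rewrite -[g1](mulrK sh3_unit) /= E4 mul1r.
pose gamma := - (s h3 * g0).
have shift x y : g0 * x + g1 * s y = 0 -> s y = gamma * x.
  move=> /addr0_eq g1syE.
  by rewrite -(mulVKr sh3_unit (s y)) -g1E -g1syE mulNr mulrN mulrA.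
pose beta := (s h3)^-1 * gamma * h3.
have betaE w : beta * (h3^-1 * w) = (s h3)^-1 * gamma * w.
  by rewrite /beta -mulrA mulVKr.
(* With h = h3 (t^3 + x t^2 + y t + z) the equations read s x = beta,
   s y = beta x, s z = beta y and a = beta z. *)
pose x := h3^-1 * h2; pose y := h3^-1 * h1; pose z := h3^-1 * h0.
have sxE : s x = beta by rewrite rmorphM rmorphV // (shift _ _ E3) mulrA.
have syE : s y = beta * x.
  by rewrite betaE rmorphM rmorphV // (shift _ _ E2) mulrA.
have szE : s z = beta * y.
  by rewrite betaE rmorphM rmorphV // (shift _ _ E1) mulrA.
have aE : a = beta * z.
  by rewrite betaE mulrN mulrA mulVr // mul1r mulNr E0 opprK.
have xyE : x * sinv y = z by apply: (can_inj sK); rewrite rmorphM Ks sxE szE.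
by exists 0, (sinv y); apply: quartic_factor_eqs_c0; rewrite Ks syE -mulrA xyE.
Qed.

Lemma quartic_eqs_of_coef_eqs g0 g1 g2 g3 h0 h1 h2 h3 :
  g0 * h0 = - a ->
  g0 * h1 + g1 * s h0 = 0 ->
  g0 * h2 + g1 * s h1 + g2 * s (s h0) = 0 ->
  g0 * h3 + g1 * s h2 + g2 * s (s h1) + g3 * s (s (s h0)) = 0 ->
  g1 * s h3 + g2 * s (s h2) + g3 * s (s (s h1)) = 1 ->
  g2 * s (s h3) + g3 * s (s (s h2)) = 0 ->
  g3 * s (s (s h3)) = 0 ->
  exists c d, quartic_factor_eqs s a c d.
Proof.
move=> E0 E1 E2 E3 E4 E5 E6.
have s3_neq0 x : x != 0 -> s (s (s x)) != 0.
  by move=> ?; do 3 apply: rmorph_neq0.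
have [h3_eq0 | h3_neq0] := eqVneq h3 0; last first.
  have g3_eq0 := mulr_eq0_neq0 E6 (s3_neq0 _ h3_neq0).
  rewrite g3_eq0 !mul0r !addr0 in E3 E4 E5.
  have g2_eq0 := mulr_eq0_neq0 E5 (rmorph_neq0 (rmorph_neq0 h3_neq0)).
  rewrite g2_eq0 !mul0r !addr0 in E2 E3 E4.
  exact: quartic_eqs_of_left_linear_factor E4 E3 E2 E1 E0.
rewrite h3_eq0 !rmorph0 !mulr0 ?add0r in E3 E4 E5.
have [h2_eq0 | h2_neq0] := eqVneq h2 0.
  rewrite h2_eq0 !rmorph0 !mulr0 ?addr0 ?add0r in E2 E3 E4.
  exact: quartic_eqs_of_right_linear_factor E4 E3 E2 E1 E0.
have g3_eq0 := mulr_eq0_neq0 E5 (s3_neq0 _ h2_neq0).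
rewrite g3_eq0 !mul0r !addr0 in E3 E4.
exact: quartic_eqs_of_quadratic_factors E4 E3 E2 E1 E0.
Qed.

Lemma quartic_eqs_of_skew_factorization (g h : {poly D}) :
  'X^4 - a%:P = skew_mul s g h -> (size g < 5)%N -> (size h < 5)%N ->
  exists c d, quartic_factor_eqs s a c d.
Proof.
move=> fE lt_g lt_h.
have E k : ('X^4 - a%:P)`_k = (skew_mul s g h)`_k by rewrite fE.
have high_coefs_eq0 (p : {poly D}) :
    (size p < 5)%N -> [/\ p`_4 = 0, p`_5 = 0 & p`_6 = 0].
  by move=> lt_p; split; rewrite nth_default // -ltnS (leq_trans lt_p).
have [[g4 g5 g6] [h4 h5 h6]] := (high_coefs_eq0 g lt_g, high_coefs_eq0 h lt_h).
move: (E 0%N) (E 1%N) (E 2%N) (E 3%N) (E 4%N) (E 5%N) (E 6%N).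
rewrite !coefB !coefXn !coefC !coef_skew_mul !big_ord_recl !big_ord0 /=.
rewrite g4 g5 g6 h4 h5 h6.
rewrite !(rmorph0, mulr0, mul0r, addr0, add0r, subr0, sub0r, oppr0) !addrA.
move=> E0 E1 E2 E3 E4 E5 E6.
exact: quartic_eqs_of_coef_eqs
  (esym E0) (esym E1) (esym E2) (esym E3) (esym E4) (esym E5) (esym E6).
Qed.

End QuarticFactors.

Theorem mainTheorem16 (D : unitRingType)
  (hD : forall x : D, x != 0 -> x \is a GRing.unit)
  (s : {rmorphism D -> D}) (hs : bijective s) (a : D) :
  skew_reducible s ('X^4 - a%:P) <->
  exists c d : D,
    s (s c) * s c * c + s (s d) * c + s (s c) * s d = 0 /\
    s (s d) * d + s (s c) * s c * d = a.
Proof.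
have [sinv sK Ks] := hs; split => [[g [h [fE [lt_g lt_h]]]] | [c [d cdE]]].
  rewrite size_XnsubC // in lt_g lt_h.
  by apply: (quartic_eqs_of_skew_factorization hD sK Ks fE).
exists (Poly [:: s (s c) * s c + s (s d); s (s c); 1]), (Poly [:: - d; - c; 1]).
rewrite size_XnsubC //; split; first exact: quartic_eq_skew_mul_quadratics.
by split; apply: leq_ltn_trans (size_Poly _) _.
Qed.
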